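(* Let $A(0)=1$ and $A(n)=nA(n-1)+1$ for $n\ge1$, and for $k\ge1$ let $c_k$ be the unique integer in $[0,2^k)$ with $A(c_k)\equiv0\pmod{2^k}$. Then for all $k\ge1$, $$c_{k+1}=\begin{cases}c_k & \text{if } 2^{k+1}\mid A(c_k),\\ c_k+2^k & \text{otherwise.}\end{cases}$$
   Context: For each $k\ge1$ there is exactly one integer $n\in[0,2^k)$ with $A(n)\equiv 0\pmod{2^k}$; this is $c_k$. *)

From mathcomp Require Import all_boot.
Set Implicit Arguments. Unset Strict Implicit. Unset Printing Implicit Defensive.

Fixpoint A (n : nat) : nat :=
  match n with
  | 0 => 1
  | m.+1 => m.+1 * A m + 1
  end.

(* c is "a" (by the context: the unique) integer in [0, 2^k) with 2^k | A(c). *)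
Definition is_c (k c : nat) : Prop := c < 2 ^ k /\ 2 ^ k %| A c.

(** Shifting n by an even m > 0 changes A(n) by m modulo 2m when n is odd and
    not at all when n is even.  Hence A is 2^k-periodic modulo 2^k, and a root
    c of A modulo 2^k (necessarily odd) lifts to exactly one of c, c + 2^k
    modulo 2^(k+1): these two values of A differ by 2^k modulo 2^(k+1). *)

From mathcomp Require Import all_boot.
From Stdlib Require Import Lia.
From mathcomp Require Import zify.

Set Implicit Arguments.
Unset Strict Implicit.
Unset Printing Implicit Defensive.

Lemma oddA n : odd (A n) = ~~ odd n.
Proof.
elim: n => [//|n IH] /=.
by rewrite addn1 /= oddM IH /=; case: (odd n).
Qed.

Lemma A_add_even (M n : nat) : 0 < M ->
  exists q, A (n + 2 * M) = A n + 2 * M * odd n + 4 * M * q.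
Proof.
move=> M_gt0; elim: n => [|n [q IH]].
  have eM : 2 * M = (2 * M).-1.+1 by lia.
  have oddApred : odd (A (2 * M).-1) = false.
    by move: (oddM 2 M); rewrite eM /= oddA => ->.
  exists (A (2 * M).-1)./2.
  have := odd_double_half (A (2 * M).-1); rewrite oddApred add0n => eA.
  by rewrite {1}eM /= -eM -{1}eA -!muln2; lia.
rewrite addSn /= IH.
have := odd_double_half (A n); rewrite oddA => eA.
have := odd_double_half n => en.
case: (odd n) eA en => /= eA en.
- exists ((n./2).+1 + (A n)./2 + M + (n.+1 + 2 * M) * q).
  by rewrite -eA -[in LHS]en -[in RHS]en -!muln2; nia.
- exists ((A n)./2 + (n.+1 + 2 * M) * q).
  by rewrite -[in LHS]eA -[in RHS]eA -[in LHS]en -[in RHS]en -!muln2; nia.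
Qed.

Lemma A_add_pow2S (k n : nat) : 0 < k ->
  A (n + 2 ^ k) = A n + 2 ^ k * odd n %[mod 2 ^ k.+1].
Proof.
move=> k_gt0; have e2k : 2 ^ k = 2 * 2 ^ k.-1 by rewrite -expnS prednK.
have [q] := A_add_even n (expn_gt0 2 k.-1).
have e4 : 4 * 2 ^ k.-1 = 2 ^ k.+1 by rewrite expnS e2k mulnA.
rewrite -e2k e4 => ->.
by rewrite [_ + 2 ^ k.+1 * q]addnC [_ * q]mulnC modnMDl.
Qed.

Lemma A_add_pow2 (k n : nat) : A (n + 2 ^ k) = A n %[mod 2 ^ k].
Proof.
case: (posnP k) => [-> | k_gt0]; first by rewrite !modn1.
rewrite -(modn_dvdm _ (dvdn_exp2l 2 (leqnSn k))) A_add_pow2S //.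
by rewrite modn_dvdm ?dvdn_exp2l // mulnC addnC modnMDl.
Qed.

Lemma A_add_mul_pow2 (k n m : nat) : A (n + m * 2 ^ k) = A n %[mod 2 ^ k].
Proof.
elim: m => [|m IH]; first by rewrite mul0n addn0.
by rewrite mulSn addnCA addnC A_add_pow2.
Qed.

Lemma dvd_A_modn (k n : nat) : (2 ^ k %| A n) = (2 ^ k %| A (n %% 2 ^ k)).
Proof. by rewrite /dvdn {1}(divn_eq n (2 ^ k)) addnC A_add_mul_pow2. Qed.

Lemma odd_of_dvd_A (k n : nat) : 0 < k -> 2 ^ k %| A n -> odd n.
Proof.
move=> k_gt0 /(dvdn_trans (dvdn_exp2l 2 k_gt0)).
by rewrite expn1 dvdn2 oddA negbK.
Qed.

Lemma dvd_A_add_pow2 (k c : nat) : 2 ^ k %| A c ->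
  (2 ^ k.+1 %| A (c + 2 ^ k)) = ~~ (2 ^ k.+1 %| A c).
Proof.
case: (posnP k) => [-> _ | k_gt0 dvd_c].
  rewrite expn0 addn1 /= !dvdn2 oddD oddM /= oddA.
  by case: (odd c).
have odd_c := odd_of_dvd_A k_gt0 dvd_c.
have -> : (2 ^ k.+1 %| A (c + 2 ^ k)) = (2 ^ k.+1 %| A c + 2 ^ k * odd c).
  by rewrite /dvdn A_add_pow2S.
have [t ->] := dvdnP dvd_c.
rewrite odd_c muln1 -mulSnr expnS ![_ * 2 ^ k]mulnC !dvdn_pmul2l ?expn_gt0 //.
by rewrite !dvdn2 /= negbK.
Qed.

Lemma is_c_modn (k n : nat) : is_c k.+1 n -> is_c k (n %% 2 ^ k).
Proof.
move=> [_ dvd_n]; split; first by rewrite ltn_mod expn_gt0.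
by rewrite -dvd_A_modn (dvdn_trans _ dvd_n) // dvdn_exp2l.
Qed.

Lemma ltn_expS_cases (k n : nat) :
  n < 2 ^ k.+1 -> n = n %% 2 ^ k \/ n = n %% 2 ^ k + 2 ^ k.
Proof.
move=> n_lt; have en := divn_eq n (2 ^ k).
have : n %/ 2 ^ k < 2 by rewrite ltn_divLR ?expn_gt0 // -expnS.
case: (n %/ 2 ^ k) en => [|[|//]] en _.
- by left; rewrite {1}en.
- by right; rewrite {1}en mul1n addnC.
Qed.

Lemma is_c_unique (k a b : nat) : is_c k a -> is_c k b -> a = b.
Proof.
elim: k a b => [|k IH] a b.
  by rewrite /is_c expn0 => -[a_lt1 _] [b_lt1 _]; lia.
move=> ca cb; have [_ dvd_r] := is_c_modn ca.
have er := IH _ _ (is_c_modn ca) (is_c_modn cb).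
have no_two_lifts : 2 ^ k.+1 %| A (a %% 2 ^ k) ->
    ~~ (2 ^ k.+1 %| A (a %% 2 ^ k + 2 ^ k)).
  by rewrite dvd_A_add_pow2 // => ->.
case: ca cb => [a_lt da] [b_lt db].
case: (ltn_expS_cases a_lt) => ea;
  case: (ltn_expS_cases b_lt); rewrite -er => eb.
- by rewrite ea eb.
- by move: no_two_lifts; rewrite -eb -ea da db => /(_ isT).
- by move: no_two_lifts; rewrite -ea -eb da db => /(_ isT).
- by rewrite ea eb.
Qed.

Theorem corollaryA11 (k ck ck1 : nat) :
  0 < k -> is_c k ck -> is_c k.+1 ck1 ->
  ck1 = (if 2 ^ k.+1 %| A ck then ck else ck + 2 ^ k).
Proof.
move=> _ c_k c_k1.
have er : ck1 %% 2 ^ k = ck := is_c_unique (is_c_modn c_k1) c_k.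
case: c_k c_k1 => [_ dvd_ck] [ck1_lt dvd_ck1].
case: (ltn_expS_cases ck1_lt); rewrite er => eck1; rewrite eck1 in dvd_ck1 *.
- by rewrite dvd_ck1.
- by move: dvd_ck1; rewrite dvd_A_add_pow2 //; case: ifP.
Qed.
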